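(* Let $v\in\{\mathrm{RR},\mathrm{VV},\mathrm{VN},\mathrm{AZ}\}$ and let $\mathbf X_1=(X_{11},\ldots,X_{1d})^\top$ be a $d$-dimensional random vector with mean $\boldsymbol\mu$ and covariance $\boldsymbol\Sigma$ satisfying Assumption 1 for the variant $v$ and Assumption 2. Then $\sigma^2_{C^v}>0$ and hence $\sigma^2_{B^v}>0$.
   Context: MCVs: $C^{\mathrm{RR}}=\sqrt{(\det\boldsymbol\Sigma)^{1/d}/(\boldsymbol\mu^\top\boldsymbol\mu)}$, $C^{\mathrm{VV}}=\sqrt{\mathrm{tr}\boldsymbol\Sigma/(\boldsymbol\mu^\top\boldsymbol\mu)}$, $C^{\mathrm{VN}}=\sqrt{1/(\boldsymbol\mu^\top\boldsymbol\Sigma^{-1}\boldsymbol\mu)}$, $C^{\mathrm{AZ}}=\sqrt{\boldsymbol\mu^\top\boldsymbol\Sigma\boldsymbol\mu/(\boldsymbol\mu^\top\boldsymbol\mu)^2}$. Assumption 1 (for variant $v$): $\boldsymbol\mu\neq\mathbf 0$ and all coordinates have finite fourth moments; moreover for $v\in\{\mathrm{RR},\mathrm{VN}\}$, $\boldsymbol\Sigma$ is regular; for $v=\mathrm{VV}$, $\boldsymbol\Sigma\neq\mathbf 0_{d\times d}$; for $v=\mathrm{AZ}$, $\boldsymbol\mu^\top\boldsymbol\Sigma\boldsymbol\mu>0$. Assumption 2: no coordinate of $\mathbf X_1$ is conditionally two-point distributed, where the $r$-th coordinate $Y_r$ of a random vector $\mathbf Y\in\mathbb R^d$ is called conditionally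 two-point distributed if, given the remaining components $(Y_s)_{s\neq r}$, it is (conditionally) degenerate or takes (conditionally) only two different values with positive probability. $\boldsymbol\Psi_3,\boldsymbol\Psi_4$: $[\boldsymbol\Psi_3]_{(a-1)d+r,s}=E(X_{1a}X_{1r}X_{1s})-E(X_{1a}X_{1r})E(X_{1s})$, $[\boldsymbol\Psi_4]_{(a-1)d+r,(b-1)d+s}=E(X_{1a}X_{1r}X_{1b}X_{1s})-E(X_{1a}X_{1r})E(X_{1b}X_{1s})$. For $\mathbf x\in\mathbb R^d$, $[\widetilde{\mathbf D}(\mathbf x)]_{(a-1)d+r,s}=-x_r\mathbf 1\{s=a\neq r\}-2x_s\mathbf 1\{s=r=a\}-x_a\mathbf 1\{r=s\neq a\}$. $\mathrm{vec}$ stacks columns, $\otimes$ is the Kronecker product. Row vectors: $\mathbf A_{\mathrm{RR}}=\Big(-2d\det(\boldsymbol\Sigma)\frac{\boldsymbol\mu^\top}{(\boldsymbol\mu^\top\boldsymbol\mu)^{d+1}}+\frac{\det(\boldsymbol\Sigma)(\mathrm{vec}(\boldsymbol\Sigma^{-1}))^\top}{(\boldsymbol\mu^\top\boldsymbol\mu)^d}\widetilde{\mathbf D}(\boldsymbol\mu),\ \frac{\det(\boldsymbol\Sigma)(\mathrm{vec}(\boldsymbol\Sigma^{-1}))^\top}{(\boldsymbol\mu^\top\boldsymbol\mu)^d}\Big)$, $\mathbf A_{\mathrm{VV}}=\Big(-2\,\mathrm{tr}(\boldsymbol\Sigma)\frac{\boldsymbol\mu^\top}{(\boldsymbol\mu^\top\boldsymbol\mu)^2}+\frac{(\mathrm{vec}(\mathbf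 I_d))^\top\widetilde{\mathbf D}(\boldsymbol\mu)}{\boldsymbol\mu^\top\boldsymbol\mu},\ \frac{(\mathrm{vec}(\mathbf I_d))^\top}{\boldsymbol\mu^\top\boldsymbol\mu}\Big)$, $\mathbf A_{\mathrm{VN}}=\Big(2\boldsymbol\mu^\top\boldsymbol\Sigma^{-1}-[(\boldsymbol\mu^\top\boldsymbol\Sigma^{-1})\otimes(\boldsymbol\mu^\top\boldsymbol\Sigma^{-1})]\widetilde{\mathbf D}(\boldsymbol\mu),\ -(\boldsymbol\mu^\top\boldsymbol\Sigma^{-1})\otimes(\boldsymbol\mu^\top\boldsymbol\Sigma^{-1})\Big)$, $\mathbf A_{\mathrm{AZ}}=\Big(-4\boldsymbol\mu^\top\boldsymbol\Sigma\boldsymbol\mu\frac{\boldsymbol\mu^\top}{(\boldsymbol\mu^\top\boldsymbol\mu)^3}+2\frac{\boldsymbol\mu^\top\boldsymbol\Sigma}{(\boldsymbol\mu^\top\boldsymbol\mu)^2}+\frac{(\boldsymbol\mu^\top\otimes\boldsymbol\mu^\top)\widetilde{\mathbf D}(\boldsymbol\mu)}{(\boldsymbol\mu^\top\boldsymbol\mu)^2},\ \frac{\boldsymbol\mu^\top\otimes\boldsymbol\mu^\top}{(\boldsymbol\mu^\top\boldsymbol\mu)^2}\Big)$. $S_{\mathrm{RR}}=d^{-2}(C^{\mathrm{RR}})^{2-4d}$, $S_{\mathrm{VV}}=(C^{\mathrm{VV}})^{-2}$, $S_{\mathrm{VN}}=(C^{\mathrm{VN}})^{6}$, $S_{\mathrm{AZ}}=(C^{\mathrm{AZ}})^{-2}$;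 $\sigma^2_{C^v}=\frac{S_v}{4}\mathbf A_v(\boldsymbol\mu,\boldsymbol\Sigma)\begin{pmatrix}\boldsymbol\Sigma&\boldsymbol\Psi_3^\top\\\boldsymbol\Psi_3&\boldsymbol\Psi_4\end{pmatrix}\mathbf A_v(\boldsymbol\mu,\boldsymbol\Sigma)^\top$ and $\sigma^2_{B^v}=(C^v)^{-4}\sigma^2_{C^v}$. *)

From HB Require Import structures.
From mathcomp Require Import all_boot all_order all_algebra.
From mathcomp Require Import all_classical all_reals all_analysis.
Set Implicit Arguments.
Unset Strict Implicit.
Unset Printing Implicit Defensive.
Import Order.TTheory GRing.Theory Num.Theory.
Import numFieldNormedType.Exports.
Local Open Scope classical_set_scope.
Local Open Scope ring_scope.

(* The four variants of the multivariate coefficient of variation. *)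
Inductive mcv_variant := RR | VV | VN | AZ.

(* Index convention: the paper's index (a-1)d+r of R^{d^2} is the MathComp
   index [mxvec_index a r] (= a*d + r with 0-based a, r); [mxvec M] has entry
   [M a r] at [mxvec_index a r]. *)

(* vec(M)^T : vec stacks columns, so entry (a-1)d+r is M_{r,a}. *)
Definition vecT {R : ringType} {d : nat} (M : 'M[R]_d) : 'rV[R]_(d * d) :=
  mxvec M^T.

(* Kronecker product of two row vectors u (x) w : entry (a-1)d+r is u_a w_r. *)
Definition kronr {R : ringType} {d : nat} (u w : 'rV[R]_d) : 'rV[R]_(d * d) :=
  mxvec (u^T *m w).

Definition Dtilde {R : ringType} {d : nat} (x : 'cV[R]_d) : 'M[R]_(d * d, d) :=
  \matrix_(k, s) (mxvec (\matrix_(a, r)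
      (- (x r 0) * ((s == a) && (a != r))%:R
       - 2%:R * x s 0 * ((s == r) && (r == a))%:R
       - x a 0 * ((r == s) && (s != a))%:R))) 0 k.

Section Moments.
Variables (R : realType) (d0 : measure_display) (T : measurableType d0)
  (P : probability T R) (d : nat) (X : 'I_d -> T -> R).

Definition Ex (f : T -> R) : R := fine ('E_P[f])%E.

Definition mu : 'cV[R]_d := \col_i Ex (X i).

Definition Sigma : 'M[R]_d :=
  \matrix_(a, b) (Ex (fun w => X a w * X b w) - mu a 0 * mu b 0).

Definition Psi3 : 'M[R]_(d * d, d) :=
  \matrix_(k, s) (mxvec (\matrix_(a, r)
     (Ex (fun w => X a w * X r w * X s w)
      - Ex (fun w => X a w * X r w) * Ex (X s)))) 0 k.

Definition Psi4 : 'M[R]_(d * d, d * d) :=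
  \matrix_(k, l) (mxvec (\matrix_(a, r)
     ((mxvec (\matrix_(b, s)
         (Ex (fun w => X a w * X r w * X b w * X s w)
          - Ex (fun w => X a w * X r w) * Ex (fun w => X b w * X s w)))) 0 l))) 0 k.

Definition assumption1 (v : mcv_variant) : Prop :=
  [/\ mu != 0,
      (forall i, P.-integrable setT (fun w => ((X i w) ^+ 4)%:E)) &
      match v with
      | RR | VN => Sigma \in unitmx
      | VV => Sigma != 0
      | AZ => 0 < (mu^T *m Sigma *m mu) 0 0
      end].

Definition rest_sigma (r : 'I_d) : set (set T) :=
  <<s [set A | exists s : 'I_d, s != r /\
        exists U : set R, measurable U /\ A = X s @^-1` U] >>.

Definition measurable_wrt (G : set (set T)) (f : T -> R) : Prop :=
  forall U : set R, measurable U -> G (f @^-1` U).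

(* X_r is conditionally two-point distributed: given (X_s)_{s<>r}, its
   conditional law is a.s. supported on at most two points, i.e. there are
   functions a, b of the remaining components with X_r in {a, b} a.s.
   (a = b covers the conditionally degenerate case). *)
Definition cond_two_point (r : 'I_d) : Prop :=
  exists a b : T -> R,
    [/\ measurable_wrt (rest_sigma r) a,
        measurable_wrt (rest_sigma r) b &
        {ae P, forall w, X r w = a w \/ X r w = b w}].

Definition assumption2 : Prop := forall r : 'I_d, ~ cond_two_point r.

End Moments.

Section Variance.
Variables (R : realType) (d : nat).

Definition dotmm (m : 'cV[R]_d) : R := (m^T *m m) 0 0.

Definition Avec (v : mcv_variant) (m : 'cV[R]_d) (S : 'M[R]_d)
  : 'rV[R]_(d + d * d) :=
  let mm := dotmm m in
  match v with
  | RR => row_mx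
      ((- (2%:R * d%:R * \det S / mm ^+ d.+1)) *: m^T
        + (\det S / mm ^+ d) *: (vecT (invmx S) *m Dtilde m))
      ((\det S / mm ^+ d) *: vecT (invmx S))
  | VV => row_mx
      ((- (2%:R * \tr S / mm ^+ 2)) *: m^T
        + mm^-1 *: (vecT (1%:M : 'M[R]_d) *m Dtilde m))
      (mm^-1 *: vecT (1%:M : 'M[R]_d))
  | VN => let u := m^T *m invmx S in row_mx
      (2%:R *: u - kronr u u *m Dtilde m)
      (- kronr u u)
  | AZ => row_mx
      ((- (4%:R * (m^T *m S *m m) 0 0 / mm ^+ 3)) *: m^T
        + (2%:R / mm ^+ 2) *: (m^T *m S)
        + mm^-2 *: (kronr m^T m^T *m Dtilde m))
      (mm^-2 *: kronr m^T m^T)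
  end.

Definition Cv (v : mcv_variant) (m : 'cV[R]_d) (S : 'M[R]_d) : R :=
  match v with
  | RR => Num.sqrt (\det S `^ (d%:R^-1) / dotmm m)
  | VV => Num.sqrt (\tr S / dotmm m)
  | VN => Num.sqrt (1 / (m^T *m invmx S *m m) 0 0)
  | AZ => Num.sqrt ((m^T *m S *m m) 0 0 / dotmm m ^+ 2)
  end.

Definition Sv (v : mcv_variant) (m : 'cV[R]_d) (S : 'M[R]_d) : R :=
  let C := Cv v m S in
  match v with
  | RR => d%:R ^- 2 * C `^ (2%:R - 4%:R * d%:R)
  | VV => C ^- 2
  | VN => C ^+ 6
  | AZ => C ^- 2
  end.

End Variance.

Definition sigma2C {R : realType} {d0 : measure_display} {T : measurableType d0}
  (P : probability T R) {d : nat} (X : 'I_d -> T -> R) (v : mcv_variant) : R :=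
  let m := mu P X in
  let S := Sigma P X in
  let A := Avec v m S in
  Sv v m S / 4%:R
  * (A *m block_mx S (Psi3 P X)^T (Psi3 P X) (Psi4 P X) *m A^T) 0 0.

Definition sigma2B {R : realType} {d0 : measure_display} {T : measurableType d0}
  (P : probability T R) {d : nat} (X : 'I_d -> T -> R) (v : mcv_variant) : R :=
  Cv v (mu P X) (Sigma P X) ^- 4 * sigma2C P X v.

(** The block matrix in sigma^2_{C^v} is the covariance matrix of the moment
    vector Y = (X, vec(X X^T)), so sigma^2_{C^v} is, up to the positive factor
    S_v / 4, the variance of A_v Y, a quadratic polynomial in X.  If that
    variance vanished, A_v Y would be almost surely constant; as soon as the
    coefficient of X_r^2 in A_v is nonzero, solving this quadratic equation for
    X_r shows that X_r almost surely equals one of two roots that are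
    measurable in the other coordinates, i.e. X_r is conditionally two-point
    distributed.  For each variant such a coefficient exists: it is
    det(Sigma) (Sigma^-1)_rr / (mu^T mu)^d, 1 / mu^T mu, -((mu^T Sigma^-1)_r)^2
    and mu_r^2 / (mu^T mu)^2 respectively, nonzero because Sigma is a positive
    semidefinite covariance matrix and mu <> 0. *)

From HB Require Import structures.
From mathcomp Require Import all_boot all_order all_algebra.
From mathcomp Require Import all_classical all_reals all_analysis.
From mathcomp Require Import ring lra measurable_realfun.
Set Implicit Arguments.
Unset Strict Implicit.
Unset Printing Implicit Defensive.
Import Order.TTheory GRing.Theory Num.Theory.
Import numFieldNormedType.Exports.
Local Open Scope classical_set_scope.
Local Open Scope ring_scope.

Local Notation Rintegrable P f := (P.-integrable setT (EFin \o f)).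

Section real_expectation.
Variables (R : realType) (d0 : measure_display) (T : measurableType d0)
  (P : probability T R).
Implicit Types (f g : T -> R) (c : R).

Lemma ExE f : Ex P f = \int[P]_w f w.
Proof. by rewrite /Ex unlock. Qed.

Lemma RintegrableD f g :
  Rintegrable P f -> Rintegrable P g -> Rintegrable P (f \+ g).
Proof. by move=> hf hg; apply: eq_integrable (integrableD _ hf hg). Qed.

Lemma RintegrableB f g :
  Rintegrable P f -> Rintegrable P g -> Rintegrable P (f \- g).
Proof. by move=> hf hg; apply: eq_integrable (integrableB _ hf hg). Qed.

Lemma RintegrableZ c f : Rintegrable P f -> Rintegrable P (fun w => c * f w).
Proof. by move=> hf; apply: eq_integrable (integrableZl _ c hf). Qed.

Lemma Rintegrable_cst c : Rintegrable P (cst c).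
Proof. exact: finite_measure_integrable_cst. Qed.

Lemma Rintegrable_sum I (s : seq I) (F : I -> T -> R) :
  (forall i, Rintegrable P (F i)) ->
  Rintegrable P (fun w => \sum_(i <- s) F i w).
Proof.
move=> hF; have := integrable_sum measurableT s (fun i (_ : xpredT i) => hF i).
by apply: eq_integrable => // w _ /=; rewrite sumEFin.
Qed.

Lemma le_Rintegrable f g : measurable_fun setT f -> Rintegrable P g ->
  (forall w, `|f w| <= `|g w|) -> Rintegrable P f.
Proof.
move=> mf hg fg; apply: le_integrable hg => //; first exact/measurable_EFinP.
by move=> w _ /=; rewrite lee_fin.
Qed.

Lemma Rintegrable_of_sqr f : measurable_fun setT f ->
  Rintegrable P (fun w => f w ^+ 2) -> Rintegrable P f.
Proof.
move=> mf hf2; apply: le_Rintegrable mf (RintegrableD (Rintegrable_cst 1) hf2) _.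
move=> w /=; rewrite [leRHS]ger0_norm ?addr_ge0 ?sqr_ge0 //.
rewrite -[f w ^+ 2]real_normK ?num_real //.
by have := sqr_ge0 (`|f w| - 1); have := normr_ge0 (f w); nra.
Qed.

Lemma Rintegrable_mul_of_sqr f g :
  measurable_fun setT f -> measurable_fun setT g ->
  Rintegrable P (fun w => f w ^+ 2) -> Rintegrable P (fun w => g w ^+ 2) ->
  Rintegrable P (f \* g).
Proof.
move=> mf mg hf2 hg2.
apply: le_Rintegrable (measurable_funM mf mg) (RintegrableD hf2 hg2) _ => w /=.
rewrite [leRHS]ger0_norm ?addr_ge0 ?sqr_ge0 // normrM.
rewrite -[f w ^+ 2]real_normK ?num_real // -[g w ^+ 2]real_normK ?num_real //.
by have := sqr_ge0 (`|f w| - `|g w|); nra.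
Qed.

Lemma ExD f g : Rintegrable P f -> Rintegrable P g ->
  Ex P (f \+ g) = Ex P f + Ex P g.
Proof. by move=> hf hg; rewrite !ExE RintegralD. Qed.

Lemma ExB f g : Rintegrable P f -> Rintegrable P g ->
  Ex P (f \- g) = Ex P f - Ex P g.
Proof. by move=> hf hg; rewrite !ExE RintegralB. Qed.

Lemma ExZ c f : Rintegrable P f -> Ex P (fun w => c * f w) = c * Ex P f.
Proof. by move=> hf; rewrite !ExE RintegralZl. Qed.

Lemma Ex_cst c : Ex P (cst c) = c.
Proof. by rewrite ExE Rintegral_cst //= probability_setT mulr1. Qed.

Lemma Ex_sum I (s : seq I) (F : I -> T -> R) :
  (forall i, Rintegrable P (F i)) ->
  Ex P (fun w => \sum_(i <- s) F i w) = \sum_(i <- s) Ex P (F i).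
Proof.
move=> hF; elim: s => [|i s IH].
  by rewrite big_nil -[RHS](Ex_cst 0); congr Ex; apply/funext => w; rewrite big_nil.
rewrite big_cons -IH -ExD //; last exact: Rintegrable_sum.
by congr Ex; apply/funext => w; rewrite big_cons.
Qed.

Lemma Ex_ge0 f : (forall w, 0 <= f w) -> 0 <= Ex P f.
Proof. by move=> f0; rewrite ExE; apply: Rintegral_ge0. Qed.

Lemma Ex_eq0_ae f : Rintegrable P f -> (forall w, 0 <= f w) -> Ex P f = 0 ->
  {ae P, forall w, f w = 0}.
Proof.
move=> hf f0 Ef0.
have abs_f0 : (\int[P]_w `|(f w)%:E| = 0)%E.
  transitivity (\int[P]_w (f w)%:E)%E.
    by apply: eq_integral => w _; rewrite abse_EFin ger0_norm.
  rewrite -(fineK (integrable_fin_num measurableT hf)).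
  by move: Ef0; rewrite ExE /Rintegral => ->.
move/(ae_eq_integral_abs P measurableT (measurable_int _ hf)): abs_f0.
by apply: filterS => w /(_ I) [].
Qed.

End real_expectation.

Definition cov_mx (R : realType) (d0 : measure_display) (T : measurableType d0)
    (P : probability T R) (n : nat) (Y : 'I_n -> T -> R) : 'M[R]_n :=
  \matrix_(j, k) (Ex P (Y j \* Y k) - Ex P (Y j) * Ex P (Y k)).

Section covariance_matrix.
Variables (R : realType) (d0 : measure_display) (T : measurableType d0)
  (P : probability T R) (n : nat) (Y : 'I_n -> T -> R).
Hypothesis mY : forall j, measurable_fun setT (Y j).
Hypothesis iY2 : forall j, Rintegrable P (fun w => Y j w ^+ 2).

Let iY j : Rintegrable P (Y j).
Proof. exact: Rintegrable_of_sqr. Qed.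

Let iYY j k : Rintegrable P (Y j \* Y k).
Proof. exact: Rintegrable_mul_of_sqr. Qed.

Let centered j w := Y j w - Ex P (Y j).

Let centered_mulE j k : centered j \* centered k =
  (Y j \* Y k \- (fun w => Ex P (Y k) * Y j w))
  \- ((fun w => Ex P (Y j) * Y k w) \- cst (Ex P (Y j) * Ex P (Y k))).
Proof. by apply/funext => w /=; rewrite /centered; ring. Qed.

Let i_centered_mul j k : Rintegrable P (centered j \* centered k).
Proof.
rewrite centered_mulE; apply: RintegrableB; apply: RintegrableB;
  by [exact: iYY | exact: RintegrableZ | exact: Rintegrable_cst].
Qed.

Let Ex_centered_mul j k : Ex P (centered j \* centered k) = cov_mx P Y j k.
Proof.
rewrite centered_mulE mxE !ExB ?ExZ ?Ex_cst; first ring.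
all: by do ?[exact: Rintegrable_cst | exact: iYY | exact: RintegrableZ
            | apply: RintegrableB].
Qed.

Let sqr_combE (a : 'rV[R]_n) :
  (fun w => (\sum_j a 0 j * centered j w) ^+ 2) =
  (fun w => \sum_j \sum_k a 0 j * a 0 k * (centered j \* centered k) w).
Proof.
apply/funext => w; rewrite expr2 mulr_suml; apply: eq_bigr => j _.
by rewrite mulr_sumr; apply: eq_bigr => k _ /=; ring.
Qed.

Lemma cov_mx_quadE (a : 'rV[R]_n) :
  (a *m cov_mx P Y *m a^T) 0 0 =
  Ex P (fun w => (\sum_j a 0 j * (Y j w - Ex P (Y j))) ^+ 2).
Proof.
rewrite [X in Ex P X]sqr_combE Ex_sum => [|j]; last first.
  by apply: Rintegrable_sum => k; apply: RintegrableZ.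
rewrite mxE; under eq_bigr do rewrite mxE mulr_suml.
rewrite exchange_big; apply: eq_bigr => j _; rewrite Ex_sum => [|k]; last first.
  exact: RintegrableZ.
by apply: eq_bigr => k _; rewrite ExZ // Ex_centered_mul !mxE; ring.
Qed.

Lemma cov_mx_psd (a : 'rV[R]_n) : 0 <= (a *m cov_mx P Y *m a^T) 0 0.
Proof. by rewrite cov_mx_quadE; apply: Ex_ge0 => w; exact: sqr_ge0. Qed.

Lemma cov_mx_quad_eq0 (a : 'rV[R]_n) : (a *m cov_mx P Y *m a^T) 0 0 = 0 ->
  {ae P, forall w, \sum_j a 0 j * Y j w = \sum_j a 0 j * Ex P (Y j)}.
Proof.
have i_sqr_comb : Rintegrable P (fun w => (\sum_j a 0 j * centered j w) ^+ 2).
  by rewrite sqr_combE; do 2!apply: Rintegrable_sum => ?; apply: RintegrableZ.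
rewrite cov_mx_quadE => /(Ex_eq0_ae i_sqr_comb (fun w => sqr_ge0 _)).
apply: filterS => w /eqP; rewrite sqrf_eq0 => /eqP comb0.
apply/eqP; rewrite -subr_eq0 -sumrB; apply/eqP; rewrite -[RHS]comb0.
by apply: eq_bigr => j _; rewrite mulrBr.
Qed.

End covariance_matrix.

Lemma mx_neq0_entry (R : ringType) m n (A : 'M[R]_(m, n)) :
  A != 0 -> exists i j, A i j != 0.
Proof.
move=> /eqP A0; apply: contrapT => /forallNP A0'; apply/A0/matrixP => i j.
by rewrite mxE; apply/eqP/negPn/negP => Aij; apply: (A0' i); exists j.
Qed.

Lemma rv_dot_self_eq0 (R : realFieldType) n (z : 'rV[R]_n) :
  (z *m z^T) 0 0 = 0 -> z = 0.
Proof.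
rewrite mxE => /eqP; rewrite psumr_eq0 => [/allP z0|j _]; last first.
  by rewrite mxE -expr2 sqr_ge0.
apply/rowP => j; rewrite mxE; apply/eqP.
by have /implyP := z0 j (mem_index_enum j); rewrite mxE -expr2 sqrf_eq0; apply.
Qed.

Lemma dotmm_gt0 (R : realType) n (m : 'cV[R]_n) : m != 0 -> 0 < dotmm m.
Proof.
move=> m0; rewrite /dotmm lt_def; apply/andP; split.
  apply: contra m0 => /eqP; rewrite -{2}[m]trmxK => /rv_dot_self_eq0 /eqP.
  by rewrite trmx_eq0.
by rewrite mxE; apply: sumr_ge0 => i _; rewrite mxE -expr2 sqr_ge0.
Qed.

Lemma quad_delta_mx (R : ringType) n (M : 'M[R]_n) (r : 'I_n) :
  ((delta_mx 0 r : 'rV_n) *m M *m (delta_mx 0 r : 'rV_n)^T) 0 0 = M r r.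
Proof. by rewrite trmx_delta -rowE -colE !mxE. Qed.

Lemma quad_addZ (R : comNzRingType) n (M : 'M[R]_n) (x z : 'rV[R]_n) t :
  ((x + t *: z) *m M *m (x + t *: z)^T) 0 0 = (x *m M *m x^T) 0 0
    + t * ((x *m M *m z^T) 0 0 + (z *m M *m x^T) 0 0) + t ^+ 2 * (z *m M *m z^T) 0 0.
Proof.
rewrite linearD linearZ /= !mulmxDl !mulmxDr -!scalemxAl -!scalemxAr.
move: (x *m M *m x^T) (x *m M *m z^T) (z *m M *m x^T) (z *m M *m z^T).
by move=> m1 m2 m3 m4; rewrite !mxE; ring.
Qed.

Section positive_semidefinite.
Variables (R : realFieldType) (n : nat) (S : 'M[R]_n).
Hypothesis S_psd : forall x : 'rV_n, 0 <= (x *m S *m x^T) 0 0.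
Hypothesis S_sym : S^T = S.

Lemma bilin_sym (x y : 'rV[R]_n) : (y *m S *m x^T) 0 0 = (x *m S *m y^T) 0 0.
Proof.
have -> : (y *m S *m x^T) 0 0 = (y *m S *m x^T)^T 0 0 by rewrite [RHS]mxE.
by rewrite !trmx_mul trmxK S_sym mulmxA.
Qed.

Lemma psd_quad_eq0 (x : 'rV[R]_n) : (x *m S *m x^T) 0 0 = 0 -> x *m S = 0.
Proof.
move=> qx0; apply: rv_dot_self_eq0; set z := x *m S.
set b := (z *m z^T) 0 0; set c := (z *m S *m z^T) 0 0.
have b0 : 0 <= b.
  by rewrite /b mxE; apply: sumr_ge0 => j _; rewrite [z^T _ _]mxE -expr2 sqr_ge0.
have c1 : 0 < c + 1 by rewrite ltr_wpDl ?S_psd.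
have quad_line t : ((x + t *: z) *m S *m (x + t *: z)^T) 0 0 = 2 * t * b + t ^+ 2 * c.
  by rewrite quad_addZ qx0 [(z *m S *m x^T) 0 0]bilin_sym -/z -/b -/c; ring.
(* a small negative [t] makes [2 t b + t^2 c] negative unless [b = 0] *)
pose t := - b / (c + 1).
have bE : b = - t * (c + 1) by rewrite /t mulNr divfK ?opprK ?gt_eqF.
have := S_psd (x + t *: z); rewrite quad_line bE => h.
have t0 : t = 0 by nra.
by rewrite t0 oppr0 mul0r.
Qed.

Lemma psd_quad_gt0 (x : 'rV[R]_n) : x *m S != 0 -> 0 < (x *m S *m x^T) 0 0.
Proof.
by move=> xS0; rewrite lt_def S_psd andbT; apply: contra xS0 => /eqP/psd_quad_eq0 ->.
Qed.

Lemma psd_invmx_quad_gt0 (u : 'rV[R]_n) : S \in unitmx -> u != 0 ->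
  0 < (u *m invmx S *m u^T) 0 0.
Proof.
move=> S_unit u0; set y := u *m invmx S.
have yS : y *m S = u by rewrite -mulmxA mulVmx ?mulmx1.
have -> : u *m invmx S *m u^T = y *m S *m y^T.
  by rewrite yS trmx_mul trmx_inv S_sym mulmxA.
by apply: psd_quad_gt0; rewrite yS.
Qed.

Lemma psd_invmx_diag_gt0 (r : 'I_n) : S \in unitmx -> 0 < invmx S r r.
Proof.
move=> S_unit; rewrite -quad_delta_mx psd_invmx_quad_gt0 //.
by apply/eqP => /matrixP /(_ 0 r); rewrite !mxE !eqxx => /eqP; rewrite oner_eq0.
Qed.

Lemma psd_trace_gt0 : S != 0 -> 0 < \tr S.
Proof.
have S_diag i :
    S i i = ((delta_mx 0 i : 'rV_n) *m S *m (delta_mx 0 i : 'rV_n)^T) 0 0.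
  by rewrite quad_delta_mx.
move=> S0; rewrite lt_def; apply/andP; split; last first.
  by apply: sumr_ge0 => i _; rewrite S_diag.
apply: contra S0 => /eqP /psumr_eq0P diag0.
apply/eqP/row_matrixP => i; rewrite row0 rowE; apply: psd_quad_eq0.
by rewrite -S_diag diag0 // => j _; rewrite S_diag.
Qed.

End positive_semidefinite.

Section moment_vector.
Variables (R : realType) (d0 : measure_display) (T : measurableType d0)
  (P : probability T R) (d : nat) (X : 'I_d -> T -> R).

Definition moments (j : 'I_(d + d * d)) (w : T) : R :=
  row_mx (\row_i X i w) (mxvec (\matrix_(a, b) (X a w * X b w))) 0 j.

Lemma moments_lshift i : moments (lshift (d * d) i) = X i.
Proof. by apply/funext => w; rewrite /moments row_mxEl mxE. Qed.

Lemma moments_rshift a b :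
  moments (rshift d (mxvec_index a b)) = X a \* X b.
Proof. by apply/funext => w; rewrite /moments row_mxEr mxvecE mxE. Qed.

Lemma moments_ind (Q : (T -> R) -> Prop) :
  (forall i, Q (X i)) -> (forall a b, Q (X a \* X b)) -> forall j, Q (moments j).
Proof.
move=> QX QXX j; rewrite -[j](@fintype.splitK d (d * d)).
case: (fintype.split j) => [i|k] /=; first by rewrite moments_lshift.
by case/mxvec_indexP: k => a b; rewrite moments_rshift.
Qed.

Lemma Sigma_cov_mx : Sigma P X = cov_mx P X.
Proof. by apply/matrixP => a b; rewrite !mxE. Qed.

Lemma Sigma_sym : (Sigma P X)^T = Sigma P X.
Proof.
apply/matrixP => a b; rewrite !mxE mulrC; congr (Ex P _ - _).
by apply/funext => w; rewrite mulrC.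
Qed.

Lemma block_moments_cov_mx :
  block_mx (Sigma P X) (Psi3 P X)^T (Psi3 P X) (Psi4 P X) = cov_mx P moments.
Proof.
apply/matrixP => j k.
rewrite -[j](@fintype.splitK d (d * d)) -[k](@fintype.splitK d (d * d)).
case: (fintype.split j) => [a|ja]; case: (fintype.split k) => [b|kb] /=.
- by rewrite block_mxEul !mxE !moments_lshift.
- rewrite block_mxEur; case/mxvec_indexP: kb => b c.
  rewrite [LHS]mxE [LHS]mxE mxvecE !mxE moments_lshift moments_rshift.
  rewrite [_ * Ex P (X a)]mulrC; congr (Ex P _ - _).
  by apply/funext => w /=; ring.
- rewrite block_mxEdl; case/mxvec_indexP: ja => a c.
  by rewrite [LHS]mxE mxvecE !mxE moments_lshift moments_rshift.
- rewrite block_mxEdr; case/mxvec_indexP: ja => a c; case/mxvec_indexP: kb => b e.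
  rewrite [LHS]mxE mxvecE [LHS]mxE mxvecE !mxE !moments_rshift.
  by congr (Ex P _ - _); apply/funext => w /=; ring.
Qed.

Hypothesis mX : forall i, measurable_fun setT (X i).
Hypothesis iX4 : forall i, Rintegrable P (fun w => X i w ^+ 4).

Lemma Rintegrable_X_sqr i : Rintegrable P (fun w => X i w ^+ 2).
Proof.
apply: (Rintegrable_of_sqr (f := fun w => X i w ^+ 2)).
  exact: measurable_funX.
by under eq_fun do rewrite -exprM.
Qed.

Lemma measurable_moments j : measurable_fun setT (moments j).
Proof. by apply: moments_ind => [//|a b]; exact: measurable_funM. Qed.

Lemma Rintegrable_moments_sqr j : Rintegrable P (fun w => moments j w ^+ 2).
Proof.
apply: (moments_ind (Q := fun f => Rintegrable P (fun w => f w ^+ 2))) => [|a b].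
  exact: Rintegrable_X_sqr.
under eq_fun do rewrite exprMn.
apply: Rintegrable_mul_of_sqr; try exact: measurable_funX.
all: by under eq_fun do rewrite -exprM.
Qed.

Lemma Sigma_psd (x : 'rV[R]_d) : 0 <= (x *m Sigma P X *m x^T) 0 0.
Proof.
by rewrite Sigma_cov_mx; apply: cov_mx_psd => //; exact: Rintegrable_X_sqr.
Qed.

End moment_vector.

Lemma quadratic_root (R : rcfType) (al be ga x : R) : al != 0 ->
  al * x ^+ 2 + be * x + ga = 0 ->
  x = (- be + Num.sqrt (be ^+ 2 - 4 * al * ga)) / (2 * al) \/
  x = (- be - Num.sqrt (be ^+ 2 - 4 * al * ga)) / (2 * al).
Proof.
move=> al0 root_x; have al2 : 2 * al != 0 by rewrite mulf_neq0 ?pnatr_eq0.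
have -> : be ^+ 2 - 4 * al * ga = (2 * al * x + be) ^+ 2.
  have -> : ga = - (al * x ^+ 2 + be * x) by rewrite -(subr0 ga) -root_x; ring.
  ring.
rewrite sqrtr_sqr; have [x_ge|x_lt] := lerP 0 (2 * al * x + be).
  by left; rewrite ger0_norm //; field.
by right; rewrite ltr0_norm //; field.
Qed.

Lemma qform_split_coord (R : comRingType) n (l : 'I_n -> R)
    (q : 'I_n -> 'I_n -> R) (x : 'I_n -> R) (r : 'I_n) :
  \sum_i l i * x i + \sum_a \sum_b q a b * (x a * x b) =
  q r r * x r ^+ 2 + (l r + \sum_(b | b != r) (q r b + q b r) * x b) * x r
  + (\sum_(i | i != r) l i * x i
     + \sum_(a | a != r) \sum_(b | b != r) q a b * (x a * x b)).
Proof.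
rewrite [\sum_i _](bigD1 r) // [\sum_a _](bigD1 r) //= [\sum_b _](bigD1 r) //= mulrDl.
have -> : \sum_(a | a != r) \sum_b q a b * (x a * x b) =
    \sum_(a | a != r) q a r * (x a * x r)
    + \sum_(a | a != r) \sum_(b | b != r) q a b * (x a * x b).
  by rewrite -big_split /=; apply: eq_bigr => a _; rewrite (bigD1 r).
have -> : (\sum_(b | b != r) (q r b + q b r) * x b) * x r =
    \sum_(b | b != r) q r b * (x r * x b) + \sum_(a | a != r) q a r * (x a * x r).
  by rewrite mulr_suml -big_split /=; apply: eq_bigr => b _; ring.
ring.
Qed.

Definition rest_gen (R : realType) (d0 : measure_display) (T : measurableType d0)
    (d : nat) (X : 'I_d -> T -> R) (r : 'I_d) : set (set T) :=
  [set A | exists s : 'I_d, s != r /\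
    exists U : set R, measurable U /\ A = X s @^-1` U].

Local Notation measurable_rest X r f :=
  (@measurable_fun _ _ (g_sigma_algebraType (rest_gen X r)) _ setT f).

Section rest_measurability.
Variables (R : realType) (d0 : measure_display) (T : measurableType d0)
  (d : nat) (X : 'I_d -> T -> R) (r : 'I_d).

Lemma measurable_rest_wrt (f : T -> R) :
  measurable_rest X r f -> measurable_wrt (rest_sigma X r) f.
Proof.
move=> mf U mU.
by have := mf measurableT U mU; rewrite (@setTI (g_sigma_algebraType _)).
Qed.

Lemma measurable_rest_coord s : s != r -> measurable_rest X r (X s).
Proof.
move=> sr _ U mU; rewrite setTI; apply: sub_sigma_algebra.
by exists s; split => //; exists U.
Qed.

Lemma measurable_rest_sum (F : 'I_d -> T -> R) :
  (forall i, i != r -> measurable_rest X r (F i)) ->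
  measurable_rest X r (fun w => \sum_(i | i != r) F i w).
Proof.
move=> mF; under eq_fun do rewrite big_mkcond /=.
apply: measurable_sum => i; case: eqP => [_|/eqP ir]; first exact: measurable_cst.
exact: mF.
Qed.

End rest_measurability.

Section positive_variance.
Variables (R : realType) (d0 : measure_display) (T : measurableType d0)
  (P : probability T R) (d : nat) (X : 'I_d -> T -> R).
Hypothesis mX : forall i, measurable_fun setT (X i).
Hypothesis iX4 : forall i, Rintegrable P (fun w => X i w ^+ 4).
Hypothesis no_two_point : assumption2 P X.
Variables (A : 'rV[R]_(d + d * d)) (r : 'I_d).
Hypothesis Arr_neq0 : A 0 (rshift d (mxvec_index r r)) != 0.

Let l i := A 0 (lshift (d * d) i).
Let q a b := A 0 (rshift d (mxvec_index a b)).
Let c := \sum_j A 0 j * Ex P (moments X j).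
Let be w := l r + \sum_(b | b != r) (q r b + q b r) * X b w.
Let ga w := \sum_(i | i != r) l i * X i w
  + \sum_(a | a != r) \sum_(b | b != r) q a b * (X a w * X b w).
Let disc w := be w ^+ 2 - 4 * q r r * (ga w - c).
Let root1 w := (- be w + Num.sqrt (disc w)) / (2 * q r r).
Let root2 w := (- be w - Num.sqrt (disc w)) / (2 * q r r).

Let measurable_roots : measurable_rest X r root1 /\ measurable_rest X r root2.
Proof.
have mbe : measurable_rest X r be.
  apply: measurable_funD; first exact: measurable_cst.
  apply: measurable_rest_sum => b br.
  by apply: measurable_funM; [exact: measurable_cst | exact: measurable_rest_coord].
have mga : measurable_rest X r ga.
  apply: measurable_funD; apply: measurable_rest_sum => a ar.
    by apply: measurable_funM; [exact: measurable_cst | exact: measurable_rest_coord].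
  apply: measurable_rest_sum => b br; apply: measurable_funM.
    exact: measurable_cst.
  by apply: measurable_funM; exact: measurable_rest_coord.
have msqrt : measurable_rest X r (fun w => Num.sqrt (disc w)).
  apply: measurableT_comp (continuous_measurable_fun (@sqrt_continuous R)) _.
  apply: measurable_funB; first exact: measurable_funX.
  apply: measurable_funM; first exact: measurable_cst.
  by apply: measurable_funB => //; exact: measurable_cst.
split; (apply: measurable_funM; last exact: measurable_cst).
  by apply: measurable_funD => //; exact: measurable_funN.
by apply: measurable_funB => //; exact: measurable_funN.
Qed.

Let moments_combE w :
  \sum_j A 0 j * moments X j w = q r r * X r w ^+ 2 + be w * X r w + ga w.
Proof.
transitivity (\sum_i l i * X i w + \sum_a \sum_b q a b * (X a w * X b w)).
  rewrite big_split_ord /=; congr (_ + _).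
    by apply: eq_bigr => i _; rewrite moments_lshift.
  rewrite (reindex _ (curry_mxvec_bij _ _)) /= pair_bigA.
  by apply: eq_bigr => -[a b] _; rewrite moments_rshift.
exact: qform_split_coord.
Qed.

Lemma moments_quad_gt0 :
  0 < (A *m block_mx (Sigma P X) (Psi3 P X)^T (Psi3 P X) (Psi4 P X) *m A^T) 0 0.
Proof.
have mY := measurable_moments mX; have iY2 := Rintegrable_moments_sqr mX iX4.
rewrite block_moments_cov_mx lt_def cov_mx_psd // andbT.
apply/eqP => /(cov_mx_quad_eq0 mY iY2) comb_cst.
have [m_root1 m_root2] := measurable_roots.
case: (@no_two_point r); exists root1, root2.
split; [exact: measurable_rest_wrt m_root1 | exact: measurable_rest_wrt m_root2 |].
apply: filterS comb_cst => w comb_c; apply: quadratic_root Arr_neq0 _.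
by rewrite addrA -moments_combE comb_c subrr.
Qed.

End positive_variance.

Lemma vecTE (R : ringType) n (M : 'M[R]_n) a b :
  vecT M 0 (mxvec_index a b) = M b a.
Proof. by rewrite mxvecE mxE. Qed.

Lemma kronrE (R : ringType) n (u w : 'rV[R]_n) a b :
  kronr u w 0 (mxvec_index a b) = u 0 a * w 0 b.
Proof. by rewrite mxvecE mxE big_ord1 mxE. Qed.

Definition mcv_nondegenerate (R : realType) d (v : mcv_variant)
    (m : 'cV[R]_d) (S : 'M[R]_d) : Prop :=
  match v with
  | RR | VN => S \in unitmx
  | VV => S != 0
  | AZ => 0 < (m^T *m S *m m) 0 0
  end.

Section mcv_variants.
Variables (R : realType) (d : nat) (m : 'cV[R]_d) (S : 'M[R]_d).
Hypothesis S_psd : forall x : 'rV_d, 0 <= (x *m S *m x^T) 0 0.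
Hypothesis S_sym : S^T = S.
Hypothesis m_neq0 : m != 0.

Let quad_invmx_gt0 : S \in unitmx -> 0 < (m^T *m invmx S *m m) 0 0.
Proof.
move=> S_unit; rewrite -[m in _ *m m]trmxK psd_invmx_quad_gt0 //.
by rewrite trmx_eq0.
Qed.

Lemma Cv_gt0 v : mcv_nondegenerate v m S -> 0 < Cv v m S.
Proof.
case: v => /= nondeg; rewrite sqrtr_gt0 divr_gt0 ?exprn_gt0 ?dotmm_gt0 //.
- have det_neq0 : \det S != 0 by rewrite -unitfE -unitmxE.
  by rewrite /powR (negbTE det_neq0) expR_gt0.
- exact: psd_trace_gt0.
- exact: quad_invmx_gt0.
Qed.

Lemma Sv_gt0 v : mcv_nondegenerate v m S -> 0 < Sv v m S.
Proof.
move/Cv_gt0; case: v => /= C_gt0; rewrite ?invr_gt0 ?exprn_gt0 //.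
have [r [_ _]] := mx_neq0_entry m_neq0.
rewrite mulr_gt0 ?powR_gt0 // invr_gt0 exprn_gt0 // ltr0n.
exact: leq_ltn_trans (ltn_ord r).
Qed.

Lemma Avec_sqr_coef_neq0 v : mcv_nondegenerate v m S ->
  exists r, Avec v m S 0 (rshift d (mxvec_index r r)) != 0.
Proof.
have [r [j m_r]] := mx_neq0_entry m_neq0; rewrite [j]ord1 in m_r.
have mm_neq0 : dotmm m != 0 by rewrite gt_eqF ?dotmm_gt0.
case: v => /= nondeg.
- exists r; rewrite row_mxEr mxE vecTE.
  apply: mulf_neq0; last by rewrite gt_eqF ?psd_invmx_diag_gt0.
  by apply: mulf_neq0; rewrite ?invr_eq0 ?expf_neq0 // -unitfE -unitmxE.
- by exists r; rewrite row_mxEr mxE vecTE mxE eqxx mulr1 invr_eq0.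
- set u := m^T *m invmx S.
  have u_neq0 : u != 0.
    apply: contraNneq m_neq0 => u0; rewrite -trmx_eq0.
    by rewrite -[m^T](mulmxKV nondeg) -/u u0 mul0mx.
  have [i [k u_i]] := mx_neq0_entry u_neq0; rewrite [i]ord1 in u_i.
  by exists k; rewrite row_mxEr mxE kronrE oppr_eq0 mulf_neq0.
- exists r; rewrite row_mxEr mxE kronrE !mxE mulf_neq0 ?mulf_neq0 //.
  by rewrite invr_eq0 expf_neq0.
Qed.

End mcv_variants.

Theorem lemma2 (R : realType) (d0 : measure_display) (T : measurableType d0)
  (P : probability T R) (d : nat) (X : 'I_d -> T -> R) (v : mcv_variant) :
  (forall i, measurable_fun setT (X i)) ->
  assumption1 P X v ->
  assumption2 P X ->
  0 < sigma2C P X v /\ 0 < sigma2B P X v.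
Proof.
move=> mX [mu_neq0 iX4 nondeg] no_two_point.
have S_psd := Sigma_psd mX iX4; have S_sym := Sigma_sym P X.
have [r Arr_neq0] := Avec_sqr_coef_neq0 S_psd S_sym mu_neq0 nondeg.
have sigma2C_gt0 : 0 < sigma2C P X v.
  rewrite /sigma2C /= mulr_gt0 ?divr_gt0 ?Sv_gt0 //.
  exact: moments_quad_gt0 Arr_neq0.
split=> //; rewrite /sigma2B mulr_gt0 // invr_gt0 exprn_gt0 //.
exact: Cv_gt0.
Qed.
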